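(* Let $n\ge 3$ and let $H$ be a $3$-uniform hypergraph on $[n]$ such that every $4$-subset of $[n]$ contains an edge of $H$. Let $\Delta=K(H)$ be the $2$-dimensional simplicial complex whose $2$-faces are the edges of $H$ and whose $1$-skeleton is the complete graph on $[n]$. Then $\dim_{\mathbb{Q}} H_1(\Delta;\mathbb{Q})\le n-2$.
   Context: $H_1(\Delta;\mathbb{Q})$ is the first simplicial homology group of $\Delta$ with rational coefficients. *)

From HB Require Import structures.
From mathcomp Require Import all_boot all_order all_algebra.
Set Implicit Arguments. Unset Strict Implicit. Unset Printing Implicit Defensive.
Import Order.TTheory GRing.Theory Num.Theory.
Local Open Scope ring_scope.

(* Simplices are sets of vertices, oriented by the
   natural order of the vertices.  Chains are row vectors; boundary maps act
   by right multiplication. *)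

Definition edges (n : nat) : {set {set 'I_n}} := [set e : {set 'I_n} | #|e| == 2%N].

(* boundary coefficient of vertex v in oriented edge e = [a,b], a<b : b - a *)
Definition bd1_coef (n : nat) (e : {set 'I_n}) (v : 'I_n) : rat :=
  if v \in e then (if [exists w in e, (v < w)%N] then -1 else 1) else 0.

(* boundary coefficient of edge e in oriented triangle t = [a,b,c]:
   d[a,b,c] = [b,c] - [a,c] + [a,b]; the face omitting the vertex x of
   position k gets sign (-1)^k. *)
Definition bd2_coef (n : nat) (t e : {set 'I_n}) : rat :=
  if e \subset t then
    \sum_(x in t :\: e) (-1) ^+ #|[set y in t | (y < x)%N]|
  else 0.

Definition bd1 (n : nat) : 'M[rat]_(#|edges n|, n) :=
  \matrix_(i, j) bd1_coef (enum_val i) j.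

Definition bd2 (n : nat) (H : {set {set 'I_n}}) : 'M[rat]_(#|H|, #|edges n|) :=
  \matrix_(i, j) bd2_coef (enum_val i) (enum_val j).

(* dim_Q H_1(Delta; Q) = dim Z_1 - dim B_1 = dim ker d1 - rank d2. *)
Definition H1dim (n : nat) (H : {set {set 'I_n}}) : nat :=
  (\rank (kermx (bd1 n)) - \rank (bd2 H))%N.

From HB Require Import structures.
From mathcomp Require Import all_boot all_order all_algebra zify.
Set Implicit Arguments. Unset Strict Implicit. Unset Printing Implicit Defensive.
Import GRing.Theory.

(* The complete graph is connected, so rank bd1 = n - 1 and
   dim H1 = |E| - (n - 1) - rank bd2; it therefore suffices to span every edge
   vector, modulo the boundaries of the triangles of H, by 2n - 3 edges.
   This goes by induction on the vertex set S: some v in S has a link (in the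
   complex induced on S) with at most two components, represented by a and b.
   Adding the edges va and vb to the spanning set for S - v suffices, because
   along a link edge yx the boundary of the triangle vyx expresses vx through
   vy and yx.
   Such a v exists: if p, q, r lie in three different components of the link
   of v, the triangle contained in {v, p, q, r} can only be pqr.  Hence if
   every link had three components, for a in the link of v we could find w in
   the link of a whose component there is strictly contained in the component
   of a in the link of v, an infinite descent. *)

Lemma cards2_mem (T : finType) (A : {set T}) (v : T) :
  #|A| = 2 -> v \in A -> exists2 z, v != z & A = [set v; z].
Proof.
move=> A2 vA; have /cards1P[z Az] : #|A :\ v| == 1.
  by move: A2; rewrite (cardsD1 v) vA add1n => -[->].
exists z; last by rewrite -(setD1K vA) Az.
by have := set11 z; rewrite -Az !inE eq_sym => /andP[].
Qed.

Lemma cards3_mem (T : finType) (A : {set T}) (v : T) :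
  #|A| = 3 -> v \in A -> exists y z, [/\ y != z, y != v, z != v & A = [set v; y; z]].
Proof.
move=> A3 vA; have /cards2P[y [z [yz Ayz]]] : #|A :\ v| == 2.
  by move: A3; rewrite (cardsD1 v) vA add1n => -[->].
have yA : y \in A :\ v by rewrite Ayz !inE eqxx.
have zA : z \in A :\ v by rewrite Ayz !inE eqxx orbT.
move: yA zA; rewrite !inE => /andP[yv _] /andP[zv _].
exists y, z; split=> //; rewrite -(setD1K vA) Ayz.
by apply/setP => x; rewrite !inE orbA.
Qed.

Lemma cards3 (T : finType) (p q r : T) :
  p != q -> p != r -> q != r -> #|[set p; q; r]| = 3.
Proof.
move=> pq pr qr; have -> : [set p; q; r] = r |: [set p; q].
  by apply/setP => x; rewrite !inE orbC.
by rewrite cardsU1 cards2 pq !inE negb_or ![r == _]eq_sym pr qr.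
Qed.

Section Link.

Variables (n : nat) (H : {set {set 'I_n}}) (S : {set 'I_n}).

Definition link (v : 'I_n) : rel 'I_n :=
  fun x y => [&& x \in S :\ v, y \in S :\ v & [set v; x; y] \in H].

Lemma link_sym v : symmetric (link v).
Proof.
move=> x y; rewrite /link andbCA; congr [&& _, _ & _ \in H].
by apply/setP => z; rewrite !inE orbAC.
Qed.

Lemma link_connect_sym v : connect_sym (link v).
Proof. exact/sym_connect_sym/link_sym. Qed.

Definition link_comp (v a : 'I_n) := [set x in S :\ v | connect (link v) a x].

Definition link_two_components (v : 'I_n) :=
  [exists a in S :\ v, exists b in S :\ v,
     [forall x in S :\ v, connect (link v) a x || connect (link v) b x]].

Lemma link_three_components v a :
  ~~ link_two_components v -> a \in S :\ v ->
  exists b c, [/\ b \in S :\ v, c \in S :\ v, ~~ connect (link v) a b,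
                  ~~ connect (link v) a c & ~~ connect (link v) b c].
Proof.
move=> /existsPn/(_ a) + aS; rewrite aS /= => /existsPn no2.
have := no2 a; rewrite aS /= => /forallPn[b]; rewrite negb_imply orbb => /andP[bS nab].
have := no2 b; rewrite bS /= => /forallPn[c].
rewrite negb_imply negb_or => /andP[cS /andP[nac nbc]].
by exists b, c.
Qed.

Hypothesis H3 : forall t, t \in H -> #|t| = 3.
Hypothesis H4 : forall F : {set 'I_n}, #|F| = 4 -> exists2 t, t \in H & t \subset F.

Lemma link_transversal_triangle v p q r :
  p \in S :\ v -> q \in S :\ v -> r \in S :\ v ->
  ~~ connect (link v) p q -> ~~ connect (link v) p r -> ~~ connect (link v) q r ->
  [set p; q; r] \in H.
Proof.
move=> pS qS rS npq npr nqr.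
have sep y z : y \in [set p; q; r] -> z \in [set p; q; r] -> y != z ->
    ~~ connect (link v) y z.
  rewrite !inE -!orbA => /or3P[]/eqP-> /or3P[]/eqP->; rewrite ?eqxx //= => _;
  by rewrite // link_connect_sym.
have sub_link x : x \in [set p; q; r] -> x \in S :\ v.
  by rewrite !in_setU !in_set1 -!orbA => /or3P[]/eqP->.
have vT : v \notin [set p; q; r].
  by apply/negP => /sub_link; rewrite !inE eqxx.
have ne x y : ~~ connect (link v) x y -> x != y.
  by apply: contra => /eqP->; rewrite connect0.
have F4 : #|v |: [set p; q; r]| = 4 by rewrite cardsU1 vT cards3 ?ne.
have [t tH tF] := H4 F4.
have [vt | nvt] := boolP (v \in t).
  have [y [z [yz yv zv Et]]] := cards3_mem (H3 tH) vt.
  have inT x : x \in t -> x != v -> x \in [set p; q; r].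
    by move=> /(subsetP tF); rewrite in_setU1 => /orP[/eqP->|]; rewrite ?eqxx.
  have yT : y \in [set p; q; r] by rewrite inT // Et !inE eqxx orbT.
  have zT : z \in [set p; q; r] by rewrite inT // Et !inE eqxx !orbT.
  have /negP[] := sep _ _ yT zT yz.
  by apply/connect1; rewrite /link !sub_link // -Et.
suff <- : t = [set p; q; r] by [].
apply/eqP; rewrite eqEcard (H3 tH) cards3 ?ne // leqnn andbT.
apply/subsetP => x xt; have := subsetP tF x xt; rewrite in_setU1.
by case/orP => // /eqP xv; rewrite -xv xt in nvt.
Qed.

Lemma link_comp_descent v a :
  v \in S -> a \in S :\ v -> ~~ link_two_components v -> ~~ link_two_components a ->
  exists2 w, w \in S :\ a & #|link_comp a w| < #|link_comp v a|.
Proof.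
move=> vS aSv v3 a3.
have [b [c [bSv cSv nab nac nbc]]] := link_three_components v3 aSv.
have inSa x : x \in S :\ v -> ~~ connect (link v) a x -> x \in S :\ a.
  move=> xSv nax; rewrite in_setD1 (subsetP (subsetDl S [set v]) x xSv) andbT.
  by apply: contra nax => /eqP->; rewrite connect0.
have vSa : v \in S :\ a.
  by move: aSv; rewrite !inE eq_sym vS => /andP[-> _].
have link_abc : link a b c.
  by rewrite /link !inSa // (link_transversal_triangle aSv bSv cSv).
have to_b y : y \in S :\ v -> ~~ connect (link v) a y -> connect (link a) b y.
  move=> ySv nay; have [bay | nby] := boolP (connect (link v) b y).
    have ncy : ~~ connect (link v) c y.
      by apply: contra nbc => cy; rewrite (connect_trans bay) // link_connect_sym.
    apply: connect_trans (connect1 link_abc) (connect1 _).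
    by rewrite /link !inSa // (link_transversal_triangle aSv cSv ySv).
  by apply: connect1; rewrite /link !inSa // (link_transversal_triangle aSv bSv ySv).
have [q [r [qSa rSa nvq nvr nqr]]] := link_three_components a3 vSa.
have [w [wSa nvw nbw]] : exists w, [/\ w \in S :\ a, ~~ connect (link a) v w
                                      & ~~ connect (link a) b w].
  have [bq | nbq] := boolP (connect (link a) b q); last by exists q.
  exists r; split=> //; apply: contra nqr => br.
  by apply: connect_trans br; rewrite link_connect_sym.
exists w => //; rewrite [X in _ < X](cardsD1 a) inE aSv connect0 add1n ltnS.
apply/subset_leq_card/subsetP => x; rewrite /link_comp !inE => /andP[/andP[xa xS] wx].
have xv : x != v by apply: contraNneq nvw => <-; rewrite link_connect_sym.
rewrite xa xv xS !andTb; apply: contraR nbw => nax.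
apply: connect_trans (to_b x _ nax) _; first by rewrite !inE xv.
by rewrite link_connect_sym.
Qed.

Lemma exists_link_two_components :
  1 < #|S| -> exists2 v, v \in S & link_two_components v.
Proof.
move=> S2; apply/exists_inP; apply: contraT => /exists_inPn no2.
have [v vS] : exists v, v \in S by apply/card_gt0P/ltnW.
have [a aSv] : exists a, a \in S :\ v.
  by apply/card_gt0P; move: S2; rewrite (cardsD1 v) vS.
move: {2}#|_| (leqnn #|link_comp v a|) => k; elim: k v a vS aSv => [|k IH] v a vS aSv.
  rewrite leqn0 cards_eq0 => /eqP/setP/(_ a).
  by rewrite in_set0 /link_comp in_set aSv connect0.
move=> lek; have aS : a \in S by move: aSv; rewrite inE => /andP[].
have [w wSa lt] := link_comp_descent vS aSv (no2 v vS) (no2 a aS).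
by apply: (IH a w aS wSa); rewrite -ltnS (leq_trans lt).
Qed.

End Link.

Local Open Scope ring_scope.

Lemma delta_submx_from_row (F : fieldType) m N (X : 'M[F]_(m, N))
    (r : 'rV[F]_N) (j0 : 'I_N) :
  (r <= X)%MS -> r 0 j0 != 0 ->
  (forall j, j != j0 -> r 0 j != 0 -> ('e_j : 'rV_N) <= X)%MS ->
  (('e_j0 : 'rV_N) <= X)%MS.
Proof.
move=> rX rj0 eX.
have -> : 'e_j0 = (r 0 j0)^-1 *: (r - \sum_(j | j != j0) r 0 j *: 'e_j).
  by rewrite {2}(row_sum_delta r) (bigD1 j0) //= addrK scalerA mulVf // scale1r.
rewrite scalemx_sub // addmx_sub // -scaleN1r scalemx_sub // summx_sub // => j jj0.
have [->|rj] := eqVneq (r 0 j) 0; first by rewrite scale0r sub0mx.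
by rewrite scalemx_sub // eX.
Qed.

Definition edge_vec n (e : {set 'I_n}) : 'rV[rat]_#|edges n| :=
  \row_k (enum_val k == e)%:R.

Lemma edge_vecE n (j : 'I_#|edges n|) : edge_vec (enum_val j) = 'e_j.
Proof. by apply/rowP => k; rewrite !mxE (inj_eq enum_val_inj). Qed.

Lemma bd2_coef_subset n (t e : {set 'I_n}) : bd2_coef t e != 0 -> e \subset t.
Proof. by rewrite /bd2_coef; case: ifP; rewrite ?eqxx. Qed.

Lemma bd2_coef_neq0 n (t e : {set 'I_n}) :
  e \subset t -> #|t :\: e| = 1%N -> bd2_coef t e != 0.
Proof.
move=> et /eqP/cards1P[x tDe].
by rewrite /bd2_coef et tDe big_set1 signr_eq0.
Qed.

Lemma triangle_edge_submx n (H : {set {set 'I_n}}) m (X : 'M_(m, #|edges n|))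
    (t e : {set 'I_n}) :
  (bd2 H <= X)%MS -> t \in H -> #|t| = 3%N -> e \in edges n -> e \subset t ->
  (forall e', e' \in edges n -> e' \subset t -> e' != e -> (edge_vec e' <= X)%MS) ->
  (edge_vec e <= X)%MS.
Proof.
move=> bX tH t3 eE et eX; rewrite -(enum_rankK_in eE eE) edge_vecE.
apply: (delta_submx_from_row (r := row (enum_rank_in tH t) (bd2 H))).
- exact: submx_trans (row_sub _ _) bX.
- rewrite !mxE !enum_rankK_in //; apply: bd2_coef_neq0 => //.
  move: eE; rewrite cardsD t3 inE (setIidPr et) => /eqP-> //.
move=> j jj0; rewrite !mxE enum_rankK_in // => /bd2_coef_subset jt.
rewrite -edge_vecE; apply: eX => //; first exact: enum_valP.
by apply: contraNneq jj0 => ej; apply/eqP/enum_val_inj; rewrite enum_rankK_in.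
Qed.

Section Spanning.

Variables (n : nat) (H : {set {set 'I_n}}).
Hypothesis H3 : forall t, t \in H -> #|t| = 3%N.
Hypothesis H4 : forall F : {set 'I_n}, #|F| = 4%N -> exists2 t, t \in H & t \subset F.

Lemma link_edge_submx m (X : 'M_(m, #|edges n|)) S v y x :
  (bd2 H <= X)%MS ->
  (forall e, e \in edges n -> e \subset S :\ v -> (edge_vec e <= X)%MS) ->
  link H S v y x -> (edge_vec [set v; y] <= X)%MS -> (edge_vec [set v; x] <= X)%MS.
Proof.
move=> bX oldX /and3P[ySv xSv tH] vyX.
have vx : v != x by move: xSv; rewrite !inE eq_sym => /andP[].
have tS z : z \in [set v; y; x] -> z != v -> z \in S :\ v.
  by rewrite !in_setU !in_set1 -orbA => /or3P[]/eqP-> //; rewrite eqxx.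
apply: triangle_edge_submx bX tH (H3 tH) _ _ _ => [||e' e'E e't e'vx].
- by rewrite inE cards2 vx.
- by apply/subsetP => z; rewrite !inE => /orP[]->; rewrite ?orbT.
have [ve' | nve'] := boolP (v \in e'); last first.
  apply: oldX => //; apply/subsetP => z ze'; apply: tS; first exact: subsetP e't z ze'.
  by apply: contraNneq nve' => <-.
have [z vz e'vz] : exists2 z, v != z & e' = [set v; z].
  by apply: cards2_mem ve'; move: e'E; rewrite inE => /eqP.
suff zy : z = y by rewrite e'vz zy.
have : z \in [set v; y; x] by apply: (subsetP e't); rewrite e'vz !inE eqxx orbT.
rewrite !in_setU !in_set1 -orbA eq_sym (negPf vz) /= => /orP[/eqP // | /eqP zx].
by rewrite e'vz zx eqxx in e'vx.
Qed.

Lemma edges_submx_extend m (X : 'M_(m, #|edges n|)) S v a b :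
  (bd2 H <= X)%MS ->
  (forall e, e \in edges n -> e \subset S :\ v -> (edge_vec e <= X)%MS) ->
  (edge_vec [set v; a] <= X)%MS -> (edge_vec [set v; b] <= X)%MS ->
  (forall x, x \in S :\ v -> connect (link H S v) a x || connect (link H S v) b x) ->
  forall e, e \in edges n -> e \subset S -> (edge_vec e <= X)%MS.
Proof.
move=> bX oldX aX bX' cover e eE eS.
have [ve | nve] := boolP (v \in e); last first.
  apply: oldX => //; apply/subsetP => x xe; rewrite !inE (subsetP eS) // andbT.
  by apply: contraNneq nve => <-.
have [x vx Ee] : exists2 x, v != x & e = [set v; x].
  by apply: cards2_mem ve; move: eE; rewrite inE => /eqP.
subst e; have xSv : x \in S :\ v.
  have xe : x \in [set v; x] by rewrite !inE eqxx orbT.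
  by rewrite !inE eq_sym vx (subsetP eS x xe).
have closedX : closed (link H S v) [pred y | edge_vec [set v; y] <= X]%MS.
  move=> y z yz; rewrite !inE; apply/idP/idP; apply: (link_edge_submx (S := S)) => //.
  by rewrite link_sym.
have /orP[ax | bx] := cover x xSv.
  by have := closed_connect closedX ax; rewrite !inE aX.
by have := closed_connect closedX bx; rewrite !inE bX'.
Qed.

(* The rank bound is 2|S| - 3. *)
Lemma edges_span k (S : {set 'I_n}) : #|S| = k.+2 ->
  exists m (W : 'M[rat]_(m, #|edges n|)), (\rank W <= k.*2.+1)%N /\
    forall e, e \in edges n -> e \subset S -> (edge_vec e <= bd2 H + W)%MS.
Proof.
elim: k S => [|k IH] S cS.
  exists 1%N, (edge_vec S); split=> [|e eE eS]; first exact: rank_leq_row.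
  suff -> : e = S by apply: addsmxSr.
  by apply/eqP; rewrite eqEcard eS cS; move: eE; rewrite inE => /eqP->.
have S2 : (1 < #|S|)%N by rewrite cS.
have [v vS /exists_inP[a aSv /exists_inP[b bSv /forall_inP cover]]] :=
  exists_link_two_components H3 H4 S2.
have [|m' [W' [rankW' spanW']]] := IH (S :\ v).
  by move: cS; rewrite (cardsD1 v) vS => -[].
set va := edge_vec [set v; a]; set vb := edge_vec [set v; b].
exists _, (W' + va + vb)%MS; split.
  have := (mxrank_adds_leqif W' va).1; have := (mxrank_adds_leqif (W' + va)%MS vb).1.
  have := rank_leq_row va; have := rank_leq_row vb; lia.
have WX : ((W' + va + vb)%MS <= bd2 H + (W' + va + vb))%MS by apply: addsmxSr.
apply: edges_submx_extend cover.
- exact: addsmxSl.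
- move=> e eE eS; apply: submx_trans (spanW' e eE eS) _.
  exact: addsmxS (submx_refl _) (submx_trans (addsmxSl _ _) (addsmxSl _ _)).
- exact: submx_trans (submx_trans (addsmxSr W' va) (addsmxSl _ vb)) WX.
- exact: submx_trans (addsmxSr _ vb) WX.
Qed.

Lemma card_edges_le : (2 <= n)%N ->
  (#|edges n| <= \rank (bd2 H) + (n - 2).*2.+1)%N.
Proof.
move=> n2; have [|m [W [rankW spanW]]] := edges_span (k := n - 2) (S := [set: 'I_n]).
  by rewrite cardsT card_ord; lia.
have full : (1%:M <= bd2 H + W)%MS.
  apply/row_subP => j; rewrite row1 -edge_vecE.
  exact: spanW (enum_valP j) (subsetT _).
have := mxrankS full; rewrite mxrank1.
have := (mxrank_adds_leqif (bd2 H) W).1; lia.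
Qed.

End Spanning.

Lemma mul_bd1_tr_edge n (u : 'rV[rat]_n) (j : 'I_#|edges n|) (a b : 'I_n) :
  (a < b)%N -> enum_val j = [set a; b] -> (u *m (bd1 n)^T) 0 j = u 0 b - u 0 a.
Proof.
move=> ab ej; have ba : b != a by rewrite -val_eqE /= gtn_eqF.
rewrite !mxE (bigD1 a) // (bigD1 b) ?ba //= big1 => [|k /andP[kb ka]]; last first.
  by rewrite !mxE ej /bd1_coef !inE (negPf ka) (negPf kb) mulr0.
rewrite !mxE ej /bd1_coef !inE !eqxx orbT /=.
have -> : [exists w in [set a; b], (a < w)%N].
  by apply/exists_inP; exists b; rewrite ?inE ?eqxx ?orbT.
have -> : [exists w in [set a; b], (b < w)%N] = false.
  apply/exists_inP => -[w]; rewrite !inE => /orP[]/eqP->; first by rewrite ltnNge ltnW.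
  by rewrite ltnn.
by rewrite mulrN1 mulr1 addr0 addrC.
Qed.

Lemma mul_bd1_tr_eq0_const n (u : 'rV[rat]_n.+1) :
  u *m (bd1 n.+1)^T = 0 -> u = const_mx (u 0 0).
Proof.
move=> u0; apply/rowP => b; rewrite mxE; have [-> // | b0] := eqVneq b 0.
have eE : [set 0; b] \in edges n.+1 by rewrite inE cards2 [0 == _]eq_sym b0.
have := congr1 (fun w : 'rV_#|edges n.+1| => w 0 (enum_rank_in eE [set 0; b])) u0.
rewrite (mul_bd1_tr_edge u _ (enum_rankK_in eE eE)) ?mxE; last by rewrite lt0n.
by move/eqP; rewrite subr_eq0 => /eqP.
Qed.

Lemma rank_bd1_ge n : (n.-1 <= \rank (bd1 n))%N.
Proof.
case: n => [//|n]; have ker1 : (kermx (bd1 n.+1)^T <= (const_mx 1 : 'rV_n.+1))%MS.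
  apply/row_subP => i; apply/sub_rVP; exists (row i (kermx (bd1 n.+1)^T) 0 0).
  rewrite {1}(mul_bd1_tr_eq0_const (u := row i _)).
    by apply/rowP => j; rewrite !mxE mulr1.
  by rewrite -row_mul mulmx_ker row0.
have := leq_trans (mxrankS ker1) (rank_leq_row _).
rewrite mxrank_ker mxrank_tr; lia.
Qed.

Theorem mainTheorem10 (n : nat) (H : {set {set 'I_n}}) :
  (3 <= n)%N ->
  (forall t, t \in H -> #|t| = 3%N) ->
  (forall S : {set 'I_n}, #|S| = 4%N -> exists2 t, t \in H & t \subset S) ->
  (H1dim H <= n - 2)%N.
Proof.
move=> n3 H3 H4; have := card_edges_le H3 H4 (ltnW n3).
have := rank_bd1_ge n; rewrite /H1dim mxrank_ker; lia.
Qed.
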